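(* For every integer $n\ge6$, $B(n)\ge 2^{\lceil n/2\rceil}$.
   Context: Fix a field $\mathbb{F}$. All algebras are finite-dimensional, unital, not necessarily associative $\mathbb{F}$-algebras. For a finite generating set $S$ of an algebra $\mathcal{A}$, a word in $S$ is any product (with any bracketing) of finitely many elements of $S$; its length is the number of factors, and $1$ is a word of length $0$. $L_i(S)$ is the linear span of all words in $S$ of length at most $i$. The length of $S$ is $l(S)=\min\{k\ge0: L_k(S)=\mathcal{A}\}$, and $l(\mathcal{A})=\max\{l(S): S\text{ a finite generating set of }\mathcal{A}\}$. For a natural number $n\ge2$, $B(n)$ denotes the maximal integer $l>0$ such that for every $j\in\{1,\ldots,l\}$ there exists an algebra of dimension $n$ and length $j$. *)

From mathcomp Require Import all_boot all_order all_algebra.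
Set Implicit Arguments. Unset Strict Implicit. Unset Printing Implicit Defensive.
Import GRing.Theory.
Local Open Scope ring_scope.

(* A finite-dimensional, unital, not necessarily associative F-algebra of
   dimension n, realized on the coordinate space F^n = 'rV[F]_n
   (every n-dimensional algebra is isomorphic to such a one). *)
Record nalg (F : fieldType) (n : nat) := NAlg {
  amul : 'rV[F]_n -> 'rV[F]_n -> 'rV[F]_n;
  aone : 'rV[F]_n;
  amul_linl : forall (c : F) (x y z : 'rV[F]_n),
      amul (c *: x + y) z = c *: amul x z + amul y z;
  amul_linr : forall (c : F) (x y z : 'rV[F]_n),
      amul z (c *: x + y) = c *: amul z x + amul z y;
  amul1l : forall x, amul aone x = x;
  amul1r : forall x, amul x aone = x
}.

Section Words.
Variables (F : fieldType) (n : nat) (A : nalg F n).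

Inductive word (S : seq 'rV[F]_n) : nat -> 'rV[F]_n -> Prop :=
| word_one : word S 0 (aone A)
| word_gen s : s \in S -> word S 1 s
| word_mul a b x y : (0 < a)%N -> (0 < b)%N -> word S a x -> word S b y ->
    word S (a + b) (amul A x y).

Definition inL (S : seq 'rV[F]_n) (i : nat) (v : 'rV[F]_n) : Prop :=
  exists (m : nat) (c : 'I_m -> F) (w : 'I_m -> 'rV[F]_n),
    (forall k, exists a, (a <= i)%N /\ word S a (w k)) /\
    v = \sum_(k < m) c k *: w k.

Definition L_full (S : seq 'rV[F]_n) (i : nat) : Prop :=
  forall v, inL S i v.

Definition generates (S : seq 'rV[F]_n) : Prop :=
  forall v, exists i, inL S i v.

Definition set_length (S : seq 'rV[F]_n) (k : nat) : Prop :=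
  L_full S k /\ forall i, (i < k)%N -> ~ L_full S i.

Definition alg_length (l : nat) : Prop :=
  (exists S, generates S /\ set_length S l) /\
  (forall S k, generates S -> set_length S k -> (k <= l)%N).
End Words.

(* "B(n) >= m" unfolded: for every j in {1,...,m} there exists an algebra of
   dimension n and length j (B(n) is the maximal such m). *)
Definition B_atleast (F : fieldType) (n m : nat) : Prop :=
  forall j, (1 <= j <= m)%N -> exists A : nalg F n, alg_length A j.

(* Let L be a finite set of positive integers in which every t > 1 is a sum of two elements
   of L, and let J = max L.  Take the basis e_0 = 1, one vector of weight t for each t in L,
   and spare vectors of weight 1; the product of basis vectors of weights a, b > 0 is the
   basis vector of weight a + b if a + b is in L, and 0 otherwise.  This algebra has length J.
   The weight-1 vectors generate it by words whose length is the weight, so the top vector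
   needs words of length J.  Conversely, for any generating set S, every basis vector of
   weight t is congruent to an element of L_t(S) modulo the span F_(t+1) of the vectors of
   weight > t (induction on t, using F_a F_b <= F_(a+b)), and a downward induction on the
   weight gives L_J(S) = A.
   So a chain as above ending at j with at most n - 1 elements yields an algebra of
   dimension n and length j.  For k = ceil(n/2), the binary method gives at most 2k - 1
   elements for j < 2^k, and 2k - 2 unless j = 2^k - 1; k + 1 elements suffice for 2^k;
   for 2^k - 1 with k >= 4 the steps x -> 4x + 3 through 3 save the missing element. *)

From mathcomp Require Import all_boot all_order all_algebra.
From mathcomp Require Import zify.
Set Implicit Arguments. Unset Strict Implicit. Unset Printing Implicit Defensive.
Import GRing.Theory.
Local Open Scope ring_scope.

Section AlgebraSpans.
Variables (F : fieldType) (n : nat) (A : nalg F n).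
Local Notation "x ** y" := (amul A x y) (at level 40, left associativity).

Lemma amulDl x y z : (x + y) ** z = x ** z + y ** z.
Proof. by have := amul_linl A 1 x y z; rewrite !scale1r. Qed.

Lemma amulDr x y z : z ** (x + y) = z ** x + z ** y.
Proof. by have := amul_linr A 1 x y z; rewrite !scale1r. Qed.

Lemma amul0l z : 0 ** z = 0.
Proof. by apply: (addrI (0 ** z)); rewrite -amulDl !addr0. Qed.

Lemma amul0r z : z ** 0 = 0.
Proof. by apply: (addrI (z ** 0)); rewrite -amulDr !addr0. Qed.

Lemma amulZl c x z : (c *: x) ** z = c *: (x ** z).
Proof. by have := amul_linl A c x 0 z; rewrite !addr0 amul0l addr0. Qed.

Lemma amulZr c x z : z ** (c *: x) = c *: (z ** x).
Proof. by have := amul_linr A c x 0 z; rewrite !addr0 amul0r addr0. Qed.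

Lemma amulBl x y z : (x - y) ** z = x ** z - y ** z.
Proof. by rewrite amulDl -scaleN1r amulZl scaleN1r. Qed.

Lemma amulBr x y z : z ** (x - y) = z ** x - z ** y.
Proof. by rewrite amulDr -scaleN1r amulZr scaleN1r. Qed.

Lemma alg_length_intro S0 J : generates A S0 -> (forall i, (i < J)%N -> ~ L_full A S0 i) ->
  (forall S, generates A S -> L_full A S J) -> alg_length A J.
Proof.
move=> genS0 S0_short full; split; first by exists S0; split=> //; split; [exact: full|].
by move=> S k genS [_ k_min]; rewrite leqNgt; apply/negP => /k_min; apply; exact: full.
Qed.

Variable S : seq 'rV[F]_n.

Lemma word_len0 u : word A S 0 u -> u = aone A.
Proof.
have gen0 k : word A S k u -> k = 0%N -> u = aone A.
  by case=> [//|//|a b x y a0 b0 _ _ /eqP]; rewrite addn_eq0 eqn0Ngt a0.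
by move=> w; apply: gen0 w _.
Qed.

Lemma inL0 i : inL A S i 0.
Proof. by exists 0%N, (fun _ => 0), (fun _ => 0); split=> [[]|]; rewrite ?big_ord0. Qed.

Lemma inL_word i a v : (a <= i)%N -> word A S a v -> inL A S i v.
Proof.
move=> ai wv; exists 1%N, (fun _ => 1), (fun _ => v).
by rewrite big_ord1 scale1r; split=> // _; exists a.
Qed.

Lemma inLD i u v : inL A S i u -> inL A S i v -> inL A S i (u + v).
Proof.
move=> [m1 [c1 [w1 [h1 ->]]]] [m2 [c2 [w2 [h2 ->]]]].
pose glue T (f1 : 'I_m1 -> T) (f2 : 'I_m2 -> T) k :=
  match split k with inl k1 => f1 k1 | inr k2 => f2 k2 end.
exists (m1 + m2)%N, (glue _ c1 c2), (glue _ w1 w2); split.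
  by move=> k; rewrite /glue; case: split.
rewrite big_split_ord /glue; congr (_ + _); apply: eq_bigr => k _.
  by rewrite (unsplitK (inl k)).
by rewrite (unsplitK (inr k)).
Qed.

Lemma inLZ i c v : inL A S i v -> inL A S i (c *: v).
Proof.
move=> [m [c1 [w1 [h1 ->]]]]; exists m, (fun k => c * c1 k), w1; split=> //.
by rewrite scaler_sumr; apply: eq_bigr => k _; rewrite scalerA.
Qed.

Lemma inL_sum i m (f : 'I_m -> 'rV[F]_n) :
  (forall k, inL A S i (f k)) -> inL A S i (\sum_k f k).
Proof. by move=> h; apply: (big_ind (inL A S i)) => //; [exact: inL0|exact: inLD]. Qed.

Lemma inL_ind i (P : 'rV[F]_n -> Prop) :
  P 0 -> (forall u v, P u -> P v -> P (u + v)) -> (forall c v, P v -> P (c *: v)) ->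
  (forall a v, (a <= i)%N -> word A S a v -> P v) ->
  forall v, inL A S i v -> P v.
Proof.
move=> P0 PD PZ PW v [m [c [w [h ->]]]].
by apply: (big_ind P) => // k _; apply: PZ; have [a [ai wa]] := h k; exact: PW wa.
Qed.

Lemma inL_le i j v : (i <= j)%N -> inL A S i v -> inL A S j v.
Proof.
move=> ij; apply: inL_ind; [exact: inL0|exact: inLD|exact: inLZ|].
by move=> a u ai; apply: inL_word; exact: leq_trans ij.
Qed.

Lemma inL_mul a b x y : inL A S a x -> inL A S b y -> inL A S (a + b) (x ** y).
Proof.
move=> Lx Ly; move: x Lx; apply: inL_ind => [|u v|c v|a' u aa' wu].
- by rewrite amul0l; exact: inL0.
- by move=> Lu Lv; rewrite amulDl; exact: inLD.
- by move=> Lv; rewrite amulZl; exact: inLZ.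
move: y Ly; apply: inL_ind => [|v v'|c v|b' v bb' wv].
- by rewrite amul0r; exact: inL0.
- by move=> Lv Lv'; rewrite amulDr; exact: inLD.
- by move=> Lv; rewrite amulZr; exact: inLZ.
have [a0|a_gt0] := posnP a'.
  by move: wu; rewrite a0 => /word_len0 ->; rewrite amul1l; apply: inL_word wv; lia.
have [b0|b_gt0] := posnP b'.
  by move: wv; rewrite b0 => /word_len0 ->; rewrite amul1r; apply: inL_word wu; lia.
by apply: inL_word (word_mul a_gt0 b_gt0 wu wv); exact: leq_add.
Qed.

End AlgebraSpans.

Section MonomialAlgebra.
Variables (F : fieldType) (n : nat) (m : 'I_n.+1 -> 'I_n.+1 -> option 'I_n.+1).
Hypotheses (m0l : forall k, m ord0 k = Some k) (m0r : forall i, m i ord0 = Some i).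
Local Notation "''e_' i" := (delta_mx 0 i : 'rV[F]_n.+1) : ring_scope.

Definition mono_prod i k : 'rV[F]_n.+1 := if m i k is Some c then 'e_c else 0.

Definition mono_mul (x y : 'rV[F]_n.+1) : 'rV[F]_n.+1 :=
  \sum_i x 0 i *: \sum_k y 0 k *: mono_prod i k.

Lemma sum_delta_coord (V : 'I_n.+1 -> 'rV[F]_n.+1) i : \sum_k ('e_i) 0 k *: V k = V i.
Proof.
rewrite (bigD1 i) //= mxE !eqxx scale1r big1 ?addr0 // => k /negbTE ki.
by rewrite mxE eqxx ki scale0r.
Qed.

Lemma mono_mul_linl c x y z : mono_mul (c *: x + y) z = c *: mono_mul x z + mono_mul y z.
Proof.
rewrite /mono_mul scaler_sumr -big_split; apply: eq_bigr => i _.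
by rewrite !mxE scalerDl scalerA.
Qed.

Lemma mono_mul_linr c x y z : mono_mul z (c *: x + y) = c *: mono_mul z x + mono_mul z y.
Proof.
rewrite /mono_mul scaler_sumr -big_split; apply: eq_bigr => i _.
rewrite /= scalerA mulrC -scalerA -scalerDr; congr (_ *: _).
by rewrite scaler_sumr -big_split; apply: eq_bigr => k _; rewrite !mxE scalerDl scalerA.
Qed.

Lemma mono_mul1l x : mono_mul 'e_ord0 x = x.
Proof.
rewrite /mono_mul sum_delta_coord [RHS]row_sum_delta.
by apply: eq_bigr => k _; rewrite /mono_prod m0l.
Qed.

Lemma mono_mul1r x : mono_mul x 'e_ord0 = x.
Proof.
by rewrite [RHS]row_sum_delta; apply: eq_bigr => i _; rewrite sum_delta_coord /mono_prod m0r.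
Qed.

Definition mono_alg : nalg F n.+1 := NAlg mono_mul_linl mono_mul_linr mono_mul1l mono_mul1r.

Lemma mono_alg_delta i k : amul mono_alg 'e_i 'e_k = mono_prod i k.
Proof. by rewrite /= /mono_mul !sum_delta_coord. Qed.


Section Graded.
Variables (w : 'I_n.+1 -> nat) (J : nat).
Hypotheses (w_pos : forall i, i != ord0 -> (0 < w i)%N) (w_le : forall i, (w i <= J)%N)
  (w_top : exists c, w c = J) (m_w : forall i k c, m i k = Some c -> w c = (w i + w k)%N)
  (m_gen : forall c, (1 < w c)%N ->
     exists i k, [/\ (0 < w i)%N, (0 < w k)%N, w c = (w i + w k)%N & m i k = Some c]).

Local Notation A := mono_alg.
Local Notation "x ** y" := (amul mono_alg x y) (at level 40, left associativity).

Lemma w0 : w ord0 = 0%N.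
Proof. by have := m_w (m0l ord0); lia. Qed.

Lemma aone_mono : aone A = 'e_ord0.
Proof. by []. Qed.

Definition filt a (v : 'rV[F]_n.+1) := forall i, (w i < a)%N -> v 0 i = 0.

Lemma filt0 a : filt a 0.
Proof. by move=> i _; rewrite mxE. Qed.

Lemma filtD a u v : filt a u -> filt a v -> filt a (u + v).
Proof. by move=> fu fv i wi; rewrite mxE fu ?fv ?addr0. Qed.

Lemma filtZ a c v : filt a v -> filt a (c *: v).
Proof. by move=> fv i wi; rewrite mxE fv ?mulr0. Qed.

Lemma filtB a u v : filt a u -> filt a v -> filt a (u - v).
Proof. by move=> fu fv; rewrite -scaleN1r; apply/filtD/filtZ. Qed.

Lemma filt_le a b v : (b <= a)%N -> filt a v -> filt b v.
Proof. by move=> ba fv i wi; apply: fv; exact: leq_trans wi ba. Qed.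

Lemma filt_delta a c : (a <= w c)%N -> filt a 'e_c.
Proof. by move=> ac i wi; rewrite mxE eqxx /=; case: eqP => // ic; move: wi; rewrite ic; lia. Qed.

Lemma filt1 (v : 'rV[F]_n.+1) : v 0 ord0 = 0 -> filt 1 v.
Proof. by move=> v0 i; rewrite ltnS leqn0; case: (eqVneq i ord0) => [->//|/w_pos]; lia. Qed.

Lemma filt_mul a b x y : (0 < a)%N -> (0 < b)%N -> filt a x -> filt b y -> filt (a + b) (x ** y).
Proof.
move=> a0 b0 fx fy c wc; rewrite /= /mono_mul summxE big1 // => i _.
rewrite mxE summxE; have [wi|wi] := ltnP (w i) a; first by rewrite fx // mul0r.
rewrite big1 ?mulr0 // => k _; rewrite mxE.
have [wk|wk] := ltnP (w k) b; first by rewrite fy // mul0r.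
rewrite /mono_prod; case mik: (m i k) => [c'|]; last by rewrite mxE mulr0.
rewrite mxE eqxx /=; case: eqP => [cc'|]; last by rewrite mulr0.
by have := m_w mik; rewrite -cc'; lia.
Qed.

Section UpperBound.
Variable S : seq 'rV[F]_n.+1.
Hypothesis genS : generates A S.

Definition in_L1F2 v := exists l, inL A S 1 l /\ filt 2 (v - l).

Lemma in_L1F2D u v : in_L1F2 u -> in_L1F2 v -> in_L1F2 (u + v).
Proof.
move=> [l1 [L1 f1]] [l2 [L2 f2]]; exists (l1 + l2); split; first exact: inLD.
by rewrite opprD addrACA; apply: filtD.
Qed.

Lemma in_L1F2Z c v : in_L1F2 v -> in_L1F2 (c *: v).
Proof.
move=> [l [Ll fl]]; exists (c *: l); split; first exact: inLZ.
by rewrite -scalerBr; apply: filtZ.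
Qed.

Lemma in_L1F2_filt2 v : filt 2 v -> in_L1F2 v.
Proof. by move=> fv; exists 0; split; [exact: inL0|rewrite subr0]. Qed.

Lemma in_L1F2_word a v : word A S a v -> (a <= 1)%N -> in_L1F2 v.
Proof.
move=> wv a1; exists v; split; first exact: inL_word wv.
by rewrite subrr; exact: filt0.
Qed.

Lemma unit_decomp v : exists a v', v = a *: 'e_ord0 + v' /\ filt 1 v'.
Proof.
exists (v 0 ord0), (v - v 0 ord0 *: 'e_ord0); split; first by rewrite addrC subrK.
by apply: filt1; rewrite !mxE !eqxx mulr1 subrr.
Qed.

Lemma in_L1F2_mul x y : in_L1F2 x -> in_L1F2 y -> in_L1F2 (x ** y).
Proof.
have e0 : in_L1F2 'e_ord0 by apply: (@in_L1F2_word 0); first exact: word_one.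
have near_rest a v : in_L1F2 (a *: 'e_ord0 + v) -> in_L1F2 v.
  move=> nv; rewrite -[v](addKr (a *: 'e_ord0)) addrC -scaleNr.
  exact: in_L1F2D nv (in_L1F2Z _ e0).
(* After splitting off the unit components, the remaining product lies in F_1 F_1 <= F_2. *)
move=> nx ny; have [a [x' [Ex fx']]] := unit_decomp x; have [b [y' [Ey fy']]] := unit_decomp y.
rewrite Ex in nx *; rewrite Ey in ny *; have nx' := near_rest _ _ nx; have ny' := near_rest _ _ ny.
rewrite amulDl !amulDr !amulZl !amulZr -aone_mono !amul1l amul1r.
apply: in_L1F2D; first by apply: in_L1F2D; apply: in_L1F2Z => //; apply: in_L1F2Z.
apply: in_L1F2D; first exact: in_L1F2Z.
exact/in_L1F2_filt2/(@filt_mul 1 1).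
Qed.

Lemma in_L1F2_all v : in_L1F2 v.
Proof.
have [i Lv] := genS v; move: v Lv; apply: inL_ind => [|u v|c v|a v _].
- exact/in_L1F2_filt2/filt0.
- exact: in_L1F2D.
- exact: in_L1F2Z.
elim=> [|s Ss|a' b' x y _ _ _ nx _ ny]; last exact: in_L1F2_mul.
- exact: in_L1F2_word (word_one _ _) _.
- exact: in_L1F2_word (word_gen _ Ss) _.
Qed.

Lemma delta_approx c : (0 < w c)%N -> exists l, inL A S (w c) l /\ filt (w c).+1 ('e_c - l).
Proof.
suff: forall a c, w c = a -> (0 < a)%N -> exists l, inL A S a l /\ filt a.+1 ('e_c - l).
  by move=> approx /(approx _ c erefl).
elim/ltn_ind => a IH {}c wc a_gt0.
have [a_le1|a_gt1] := leqP a 1.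
  have {a_gt0 a_le1} -> : a = 1%N by lia.
  exact: in_L1F2_all.
rewrite -wc in a_gt1 *; have [i [k [wi wk wc_ik mik]]] := m_gen a_gt1.
have [li [Lli fli]] := IH (w i) ltac:(lia) i erefl wi.
have [lk [Llk flk]] := IH (w k) ltac:(lia) k erefl wk.
exists (li ** lk); split; first by rewrite wc_ik; exact: inL_mul.
have eik : 'e_i ** 'e_k = 'e_c by rewrite mono_alg_delta /mono_prod mik.
have fli' : filt (w i) li.
  by rewrite -[li](subKr 'e_i); apply: filtB; [exact: filt_delta|exact: filt_le fli].
have -> : 'e_c - li ** lk = ('e_i - li) ** 'e_k + li ** ('e_k - lk).
  by rewrite -eik amulBl amulBr addrA subrK.
apply: filtD.
  apply: (@filt_le ((w i).+1 + w k)); first lia.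
  by apply: filt_mul => //; exact: filt_delta.
by apply: (@filt_le (w i + (w k).+1)); [lia|exact: filt_mul].
Qed.

Lemma delta_in_LJ c : inL A S J 'e_c.
Proof.
suff: forall d c, (J - w c)%N = d -> inL A S J 'e_c by move=> inLJ; exact: inLJ _ c erefl.
elim/ltn_ind => d IH {}c dc.
have [->|c0] := eqVneq c ord0; first exact: inL_word (word_one _ _).
have [l [Ll fl]] := delta_approx (w_pos c0).
rewrite -(subrK l 'e_c); apply: inLD; last exact: inL_le (w_le c) Ll.
rewrite [_ - l]row_sum_delta; apply: inL_sum => k.
have [wk|wk] := ltnP (w k) (w c).+1; first by rewrite fl // scale0r; exact: inL0.
by apply/inLZ/(IH (J - w k)%N) => //; have := w_le k; lia.
Qed.

Lemma full_LJ : L_full A S J.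
Proof. by move=> v; rewrite (row_sum_delta v); apply: inL_sum => c; exact/inLZ/delta_in_LJ. Qed.

End UpperBound.

Definition weight1_gens := [seq 'e_i | i <- enum 'I_n.+1 & w i == 1%N].

Lemma word_weight1_delta c : word A weight1_gens (w c) 'e_c.
Proof.
suff: forall a c, w c = a -> word A weight1_gens a 'e_c by exact.
elim/ltn_ind => a IH {}c wc; subst a.
have [wc_gt1|wc_le1] := ltnP 1 (w c).
  have [i [k [wi wk wc_ik mik]]] := m_gen wc_gt1.
  have eik : 'e_i ** 'e_k = 'e_c by rewrite mono_alg_delta /mono_prod mik.
  by rewrite wc_ik -eik; apply: word_mul => //; apply: IH; lia.
have [->|c0] := eqVneq c ord0; first by rewrite w0; exact: word_one.
have wc1 : w c = 1%N by have := w_pos c0; lia.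
by rewrite wc1; apply: word_gen; apply: map_f; rewrite mem_filter mem_enum wc1 eqxx.
Qed.

Lemma weight1_gens_generate : generates A weight1_gens.
Proof.
move=> v; exists J; rewrite (row_sum_delta v); apply: inL_sum => c.
exact/inLZ/(inL_word (w_le c))/word_weight1_delta.
Qed.

Lemma word_weight1E a v : word A weight1_gens a v -> v = 0 \/ exists c, v = 'e_c /\ w c = a.
Proof.
elim=> [|s|a' b' x y _ _ _ [->|[i [-> <-]]] _ [->|[k [-> <-]]]].
- by right; exists ord0; rewrite w0.
- by case/mapP=> c; rewrite mem_filter => /andP[/eqP wc _] ->; right; exists c.
- by left; rewrite amul0l.
- by left; rewrite amul0l.
- by left; rewrite amul0r.
rewrite mono_alg_delta /mono_prod; case mik: (m i k) => [c|]; last by left.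
by right; exists c; rewrite (m_w mik).
Qed.

Lemma inL_weight1_coord i v c : inL A weight1_gens i v -> (i < w c)%N -> v 0 c = 0.
Proof.
move=> + ic; move: v; apply: inL_ind => [|u v|b v|a v ai /word_weight1E [->|[c' [-> wc']]]].
- by rewrite mxE.
- by rewrite mxE => -> ->; rewrite addr0.
- by rewrite mxE => ->; rewrite mulr0.
- by rewrite mxE.
rewrite mxE eqxx /=; case: eqP => // cc'; move: ic; rewrite cc' wc'; lia.
Qed.

Lemma mono_alg_length : alg_length A J.
Proof.
apply: (alg_length_intro weight1_gens_generate); last by move=> S genS; exact: full_LJ.
move=> i iJ full; have [c wc] := w_top.
have := inL_weight1_coord (full 'e_c) (_ : (i < w c)%N); rewrite wc => /(_ iJ).
by rewrite mxE !eqxx => /eqP; rewrite oner_eq0.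
Qed.

End Graded.
End MonomialAlgebra.

Definition sum_closed (L : seq nat) :=
  {in L, forall t, (1 < t)%N -> exists a b, [/\ a \in L, b \in L & t = (a + b)%N]}.

Section SumClosedAlgebra.
Variables (F : fieldType) (n : nat) (L : seq nat) (J : nat).
Hypotheses (L_uniq : uniq L) (L0 : 0%N \notin L) (LJ : J \in L)
  (L_le : {in L, forall t, (t <= J)%N}) (L_closed : sum_closed L) (L_size : (size L <= n)%N).
Local Open Scope nat_scope.

(* Basis vector i > 0 stands for the (i-1)-th element of L; the vectors beyond size L
   get weight 1, the default of [nth]. *)
Definition chain_weight (i : 'I_n.+1) : nat := if i == ord0 then 0 else nth 1 L i.-1.

Definition chain_pos t : 'I_n.+1 := inord (index t L).+1.

Definition chain_table (i k : 'I_n.+1) : option 'I_n.+1 :=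
  if i == ord0 then Some k else if k == ord0 then Some i else
  if chain_weight i + chain_weight k \in L then Some (chain_pos (chain_weight i + chain_weight k))
  else None.

Lemma L_gt0 t : t \in L -> 0 < t.
Proof. by rewrite lt0n; apply: contraTneq => ->. Qed.

Lemma chain_weight_pos t : t \in L -> chain_weight (chain_pos t) = t.
Proof.
move=> tL; have tn : (index t L).+1 <= n by rewrite -index_mem in tL; exact: leq_trans tL L_size.
by rewrite /chain_weight -val_eqE /= inordK // nth_index.
Qed.

Lemma chain_weight_cases i : i != ord0 ->
  chain_weight i = 1 \/ chain_weight i \in L /\ chain_pos (chain_weight i) = i.
Proof.
move=> i0; rewrite /chain_weight (negbTE i0).
have i_gt0 : 0 < i by rewrite lt0n; apply: contra i0 => /eqP i0; apply/eqP/val_inj.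
have [iL|iL] := ltnP i.-1 (size L); last by left; rewrite nth_default.
right; split; first exact: mem_nth.
have idx : index (nth 1 L i.-1) L = i.-1 by exact: index_uniq.
by apply: val_inj; rewrite /= inordK idx prednK.
Qed.

Lemma chain_weight_gt0 i : i != ord0 -> 0 < chain_weight i.
Proof.
by case/chain_weight_cases=> [->//|[iL _]]; exact: L_gt0.
Qed.

Lemma chain_weight_le i : chain_weight i <= J.
Proof.
have [->|/chain_weight_cases [->|[iL _]]] := eqVneq i ord0; last exact: L_le.
  by rewrite /chain_weight eqxx.
exact: L_gt0.
Qed.

Lemma chain_table_weight i k c :
  chain_table i k = Some c -> chain_weight c = chain_weight i + chain_weight k.
Proof.
rewrite /chain_table; have [-> [<-]|i0] := eqVneq i ord0; first by rewrite /chain_weight eqxx.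
have [-> [<-]|k0] := eqVneq k ord0; first by rewrite [chain_weight ord0]/chain_weight eqxx addn0.
by case: ifP => // ikL [<-]; exact: chain_weight_pos.
Qed.

Lemma chain_table_gen c : 1 < chain_weight c -> exists i k,
  [/\ 0 < chain_weight i, 0 < chain_weight k, chain_weight c = chain_weight i + chain_weight k
    & chain_table i k = Some c].
Proof.
move=> wc_gt1; have c0 : c != ord0 by apply: contraTneq wc_gt1 => ->; rewrite /chain_weight eqxx.
have [wc1|[cL posc]] := chain_weight_cases c0; first by rewrite wc1 in wc_gt1.
have [a [b [aL bL wc_ab]]] := L_closed cL wc_gt1.
have pos_neq0 t : t \in L -> chain_pos t != ord0.
  move=> tL; apply: contraNneq L0 => pos0.
  by have := chain_weight_pos tL; rewrite pos0 /chain_weight eqxx => ->.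
exists (chain_pos a), (chain_pos b); rewrite !chain_weight_pos //; split; rewrite ?L_gt0 //.
rewrite /chain_table (negbTE (pos_neq0 _ aL)) (negbTE (pos_neq0 _ bL)).
by rewrite !chain_weight_pos // -wc_ab cL posc.
Qed.

Lemma sum_closed_alg_length : exists A : nalg F n.+1, alg_length A J.
Proof.
have table0l k : chain_table ord0 k = Some k by rewrite /chain_table eqxx.
have table0r i : chain_table i ord0 = Some i.
  by rewrite /chain_table; case: eqVneq => [->|]; rewrite ?eqxx.
exists (mono_alg F table0l table0r); apply: mono_alg_length.
- exact: chain_weight_gt0.
- exact: chain_weight_le.
- by exists (chain_pos J); exact: chain_weight_pos.
- exact: chain_table_weight.
- exact: chain_table_gen.
Qed.
End SumClosedAlgebra.

Local Open Scope nat_scope.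

Definition addchain (L : seq nat) := [/\ sorted gtn L, 0 \notin L, 1 \in L & sum_closed L].

Lemma addchain1 : addchain [:: 1].
Proof. by split=> // t; rewrite inE => /eqP ->. Qed.

Lemma addchain_cons J T a b : addchain (J :: T) -> a \in J :: T -> b \in J :: T -> J < a + b ->
  addchain (a + b :: J :: T).
Proof.
move=> [sortedL L0 L1 closedL] aL bL Jab; split=> /=.
- by rewrite Jab.
- by rewrite in_cons negb_or L0 andbT; lia.
- by rewrite in_cons L1 orbT.
move=> t; rewrite in_cons => /predU1P [-> _|tL t_gt1].
  by exists a, b; rewrite !(in_cons (a + b)) aL bL !orbT.
have [x [y [xL yL ->]]] := closedL t tL t_gt1.
by exists x, y; rewrite !(in_cons (a + b)) xL yL !orbT.
Qed.

Lemma addchain_alg (F : fieldType) n J T : addchain (J :: T) -> size (J :: T) <= n ->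
  exists A : nalg F n.+1, alg_length A J.
Proof.
have gtn_trans : transitive gtn by move=> a b c /= ba cb; exact: ltn_trans cb ba.
move=> [sortedL L0 _ closedL] size_le; apply: (@sum_closed_alg_length F n (J :: T) J) => //.
- by apply: (@sorted_uniq _ gtn gtn_trans) => // x; rewrite /= ltnn.
- exact: mem_head.
move=> t; rewrite in_cons => /predU1P [->//|tT].
by have /allP/(_ t tT)/ltnW := order_path_min gtn_trans sortedL.
Qed.

Lemma addchain_gt0 J T : addchain (J :: T) -> 0 < J.
Proof. by case=> _ L0 _ _; move: L0; rewrite in_cons negb_or; lia. Qed.

Definition short_chain J s := exists T, addchain (J :: T) /\ size (J :: T) <= s.

Lemma short_chain1 : short_chain 1 1.
Proof. by exists [::]; split=> //; exact: addchain1. Qed.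

Lemma short_chain_le J s s' : s <= s' -> short_chain J s -> short_chain J s'.
Proof. by move=> ss' [T [cT sz]]; exists T; split=> //; exact: leq_trans ss'. Qed.

Lemma short_chain_double J s : short_chain J s -> short_chain (J + J) s.+1.
Proof.
move=> [T [cT sz]]; exists (J :: T); split=> //.
have J_gt0 := addchain_gt0 cT; apply: addchain_cons cT (mem_head _ _) (mem_head _ _) _; lia.
Qed.

Lemma short_chain_double_inc J s : short_chain J s -> short_chain (J + J + 1) s.+2.
Proof.
move=> /short_chain_double [T [cT sz]]; exists (J + J :: T); split=> //.
have [_ _ L1 _] := cT; apply: addchain_cons cT (mem_head _ _) L1 _; lia.
Qed.

Lemma short_chain_pow2 k : short_chain (2 ^ k) k.+1.
Proof.
elim: k => [|k IH]; first exact: short_chain1.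
by rewrite expnS mul2n -addnn; exact: short_chain_double.
Qed.

Lemma short_chain_lt_pow2 k J : 0 < J < 2 ^ k -> short_chain J (2 * k).-1.
Proof.
elim: k J => [|k IH] J /andP[J_gt0 J_lt]; first by rewrite expn0 in J_lt; lia.
have [J_le1|J_gt1] := leqP J 1.
  have -> : J = 1 by lia.
  by apply: short_chain_le short_chain1; lia.
have x_bound : 0 < J %/ 2 < 2 ^ k by rewrite expnS in J_lt; lia.
have k_gt0 : 0 < k by case: k {IH J_lt} x_bound => //; rewrite expn0; lia.
have [J_even|J_odd] : J = J %/ 2 + J %/ 2 \/ J = J %/ 2 + J %/ 2 + 1 by lia.
  by rewrite J_even; apply: short_chain_le (short_chain_double (IH _ x_bound)); lia.
by rewrite J_odd; apply: short_chain_le (short_chain_double_inc (IH _ x_bound)); lia.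
Qed.

Lemma short_chain_lt_pow2_pred k J : 0 < J < 2 ^ k -> J != 2 ^ k - 1 -> short_chain J (2 * k).-2.
Proof.
elim: k J => [|k IH] J /andP[J_gt0 J_lt] J_ne; first by rewrite expn0 in J_lt; lia.
have [J_le1|J_gt1] := leqP J 1.
  have {J_le1 J_gt0} J1 : J = 1 by lia.
  have k_gt0 : 0 < k by case: k {IH J_lt} J_ne => //; rewrite J1.
  by rewrite J1; apply: short_chain_le short_chain1; lia.
have x_bound : 0 < J %/ 2 < 2 ^ k by rewrite expnS in J_lt; lia.
have k_gt0 : 0 < k by case: k {IH J_lt J_ne} x_bound => //; rewrite expn0; lia.
have pow_gt0 := expn_gt0 2 k.
have [J_even|J_odd] : J = J %/ 2 + J %/ 2 \/ J = J %/ 2 + J %/ 2 + 1 by lia.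
  by rewrite J_even; apply: short_chain_le (short_chain_double (short_chain_lt_pow2 x_bound)); lia.
have x_ne : J %/ 2 != 2 ^ k - 1 by apply: contra J_ne; rewrite expnS; lia.
by rewrite J_odd; apply: short_chain_le (short_chain_double_inc (IH _ x_bound x_ne)); lia.
Qed.

(* 2^(k+2) - 1 = 4 (2^k - 1) + 3 costs three new elements, one fewer than the binary method. *)
Lemma addchain_mersenne_step k T : addchain (2 ^ k - 1 :: T) -> 3 \in 2 ^ k - 1 :: T ->
  exists T', [/\ addchain (2 ^ k.+2 - 1 :: T'), 3 \in 2 ^ k.+2 - 1 :: T' & size T' = (size T).+3].
Proof.
set x := 2 ^ k - 1 => cT T3; have x_gt0 := addchain_gt0 cT.
have c2 : addchain [:: x + x, x & T].
  by apply: addchain_cons cT (mem_head _ _) (mem_head _ _) _; lia.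
have c4 : addchain [:: x + x + (x + x), x + x, x & T].
  by apply: addchain_cons c2 (mem_head _ _) (mem_head _ _) _; lia.
have T3' : 3 \in [:: x + x + (x + x), x + x, x & T] by rewrite !(in_cons (_ + _)) T3 !orbT.
have c7 : addchain [:: x + x + (x + x) + 3, x + x + (x + x), x + x, x & T].
  by apply: addchain_cons c4 (mem_head _ _) T3' _; lia.
exists [:: x + x + (x + x), x + x, x & T]; rewrite (_ : 2 ^ k.+2 - 1 = x + x + (x + x) + 3).
  by split=> //; rewrite in_cons T3' orbT.
by rewrite /x !expnS; have := expn_gt0 2 k; lia.
Qed.

Lemma short_chain_mersenne k : 4 <= k -> short_chain (2 ^ k - 1) (2 * k).-2.
Proof.
suff chain3 : forall k, 4 <= k ->
    exists T, [/\ addchain (2 ^ k - 1 :: T), 3 \in 2 ^ k - 1 :: T & size T <= 2 * k - 3].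
  by move=> k_ge4; have [T [cT _ sz]] := chain3 k k_ge4; exists T; split=> //=; lia.
elim/ltn_ind => {}k IH k_ge4.
have [T [cT T3 sz]] : exists T,
    [/\ addchain (2 ^ (k - 2) - 1 :: T), 3 \in 2 ^ (k - 2) - 1 :: T & size T <= 2 * k - 6].
  have c2 : addchain [:: 2; 1] := addchain_cons addchain1 (mem_head _ _) (mem_head _ _) isT.
  have c3 : addchain [:: 3; 2; 1] := @addchain_cons _ _ 2 1 c2 isT isT isT.
  have [k_le5|k_gt5] := leqP k 5; last first.
    have [T [cT T3 sz]] := IH (k - 2) ltac:(lia) ltac:(lia).
    by exists T; split=> //; lia.
  have [->|->] : k = 4 \/ k = 5 by lia.
    by exists [:: 2; 1].
  have c6 : addchain [:: 6; 3; 2; 1] := addchain_cons c3 (mem_head _ _) (mem_head _ _) isT.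
  have c7 : addchain [:: 7; 6; 3; 2; 1] := @addchain_cons _ _ 6 1 c6 isT isT isT.
  by exists [:: 6; 3; 2; 1].
have [T' [cT' T3' sz']] := addchain_mersenne_step cT T3.
by exists T'; rewrite -(_ : (k - 2).+2 = k); [split=> //; lia|lia].
Qed.

Theorem proposition4p11 (F : fieldType) (n : nat) :
  (6 <= n)%N -> B_atleast F n (2 ^ (uphalf n)).
Proof.
case: n => [//|n] n_ge6 j /andP[j_gt0 j_le]; set k := uphalf n.+1 in j_le.
suff [T [cT sz]] : short_chain j n by exact: addchain_alg cT sz.
have k_def : k + k = n.+1 + odd n.+1 by rewrite /k uphalf_half; have := odd_double_half n.+1; lia.
have pow_gt0 := expn_gt0 2 k.
have [->|j_ne] := eqVneq j (2 ^ k).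
  by apply: short_chain_le (short_chain_pow2 k); lia.
have [j_pred|j_ne'] := eqVneq j (2 ^ k - 1); last first.
  by apply: short_chain_le (short_chain_lt_pow2_pred _ j_ne'); lia.
case: (boolP (odd n.+1)) k_def => [n_odd|n_even] k_def.
  by rewrite j_pred; apply: short_chain_le (short_chain_mersenne _); lia.
by apply: short_chain_le (short_chain_lt_pow2 (_ : 0 < j < 2 ^ k)); lia.
Qed.
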